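(* For every formula $\phi$: $\vdash\phi$ if and only if $\phi$ is valid (true at every state of every LIiP-model).
   Context: Syntax and proof system. Fix a finite set $\mathcal{A}$ of agent names containing a distinguished name $\mathsf{CM}$ (the communication medium). Messages are the terms generated by $M ::= a \mid B \mid (M,M)$, where $a\in\mathcal{A}$, $B$ ranges over an optional (possibly empty) set of further application-specific data constants, and $(M,M')$ is a pair. Let $\mathcal{P}$ be a denumerable set of propositional variables containing, for every $a\in\mathcal{A}$ and every message $M$, a distinguished atom $\mathsf{k}_a(M)$ (''$a$ knows $M$''). Formulas: $\phi ::= P \mid \phi\wedge\phi \mid \phi\vee\phi \mid \neg\phi \mid \phi\to\phi \mid [M]\phi$ ($P\in\mathcal{P}$, $M$ a message; $[M]\phi$ reads ''$M$ can intuitionistically prove $\phi$ to $\mathsf{CM}$''). Abbreviations: $\mathrm{true}:=\mathsf{k}_{\mathsf{CM}}(\mathsf{CM})$, $\mathrm{false}:=\neg\mathrm{true}$, $\phi\leftrightarrow\psi:=(\phi\to\psi)\wedge(\psi\to\phi)$, $\langle M\rangle\phi:=\neg\neg(\mathsf{k}_{\mathsf{CM}}(M)\wedge\phi)$. LIiP is the smallest set of formulas that contains all instances (arbitrary $a$, $M,M'$, $\phi,\psi$) of: the axioms of an adequate Hilbert axiomatization of intuitionistic propositional logic; $\mathsf{k}_a(a)$; $(\mathsf{k}_a(M)\wedge\mathsf{k}_a(M'))\leftrightarrow\mathsf{k}_a((M,M'))$; $[M]\mathsf{k}_{\mathsf{CM}}(M)$; $[M](\phi\to\psi)\to([M]\phi\to[M]\psi)$;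 $[M]\phi\to(\mathsf{k}_{\mathsf{CM}}(M)\to\phi)$; $[M]\phi\to\langle M\rangle\phi$; $\phi\to[M]\phi$; and is closed under modus ponens and the rule: if $\mathsf{k}_{\mathsf{CM}}(M)\to\mathsf{k}_{\mathsf{CM}}(M')$ is in the set then so is $[M']\phi\to[M]\phi$ for every $\phi$. Write $\vdash\phi$ for $\phi\in\mathrm{LIiP}$. Semantics. An LIiP-model is $(\mathcal{S},\sqsubseteq,\{R_M\}_M,\{D_a\}_{a\in\mathcal{A}},\mathcal{V})$ where $\mathcal{S}$ is a nonempty set of states, $\sqsubseteq$ a partial order on $\mathcal{S}$, $D_a(s)$ a set of messages for each agent $a$ and state $s$, and $\mathrm{cl}_a(s)$ denotes the smallest set of messages containing $a$ and $D_a(s)$ that is closed under forming pairs of its elements and under taking both components of pairs in it. $\mathcal{V}:\mathcal{P}\to 2^{\mathcal{S}}$ satisfies $\mathcal{V}(\mathsf{k}_a(M))=\{s: M\in\mathrm{cl}_a(s)\}$ and is upward closed: $s\in\mathcal{V}(P)$ and $s\sqsubseteq s'$ imply $s'\in\mathcal{V}(P)$. Write $M\preceq M'$ iff for all $s\in\mathcal{S}$, $M\in\mathrm{cl}_{\mathsf{CM}}(s)$ implies $M'\in\mathrm{cl}_{\mathsf{CM}}(s)$. The relations $R_M\subseteq\mathcal{S}\times\mathcal{S}$ satisfy: (i) $sR_Ms'$ implies $M\in\mathrm{cl}_{\mathsf{CM}}(s')$; (ii) $M\in\mathrm{cl}_{\mathsf{CM}}(s)$ implies $sR_Ms$; (iii)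 for every $s$ there is $s'$ with $sR_Ms'$; (iv) $R_M\subseteq R_{\mathsf{CM}}={\sqsubseteq}$; (v) if $sR_{\mathsf{CM}}t$ and $tR_Mu$ then $sR_Mu$; (vi) $M\preceq M'$ implies $R_M\subseteq R_{M'}$. Satisfaction: $s\models P$ iff $s\in\mathcal{V}(P)$; $\wedge,\vee$ are evaluated classically at $s$; $s\models\neg\phi$ iff no $s'\sqsupseteq s$ satisfies $\phi$; $s\models\phi\to\psi$ iff every $s'\sqsupseteq s$ satisfying $\phi$ satisfies $\psi$; $s\models[M]\phi$ iff every $s'$ with $sR_Ms'$ satisfies $\phi$. A formula is valid iff it is true at every state of every LIiP-model. *)

From mathcomp Require Import all_boot.
Set Implicit Arguments.
Unset Strict Implicit.
Unset Printing Implicit Defensive.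

Section LIiP.
(* A : finite set of agent names, CM : the communication medium,
   B : (possibly empty) set of application-specific data constants,
   V : the further propositional variables (besides the k_a(M) atoms). *)
Variables (A : finType) (CM : A) (B : countType) (V : countType).

Inductive msg : Type :=
| Ag : A -> msg
| Dat : B -> msg
| Pair : msg -> msg -> msg.

Inductive atom : Type :=
| K : A -> msg -> atom
| PV : V -> atom.

Inductive form : Type :=
| FAtom : atom -> form
| FAnd : form -> form -> form
| FOr : form -> form -> form
| FNeg : form -> form
| FImp : form -> form -> form
| FBox : msg -> form -> form.

Definition kf (a : A) (M : msg) : form := FAtom (K a M).
Definition ftrue : form := kf CM (Ag CM).
Definition ffalse : form := FNeg ftrue.
Definition fiff (p q : form) : form := FAnd (FImp p q) (FImp q p).
Definition fdia (M : msg) (p : form) : form :=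
  FNeg (FNeg (FAnd (kf CM M) p)).

(* The Hilbert system LIiP; intuitionistic propositional part given by
   Kleene's standard axiomatization of IPC in ->, /\, \/, ~. *)
Inductive Prov : form -> Prop :=
| ax_K (p q : form) : Prov (FImp p (FImp q p))
| ax_S (p q r : form) :
    Prov (FImp (FImp p q) (FImp (FImp p (FImp q r)) (FImp p r)))
| ax_andI (p q : form) : Prov (FImp p (FImp q (FAnd p q)))
| ax_andE1 (p q : form) : Prov (FImp (FAnd p q) p)
| ax_andE2 (p q : form) : Prov (FImp (FAnd p q) q)
| ax_orI1 (p q : form) : Prov (FImp p (FOr p q))
| ax_orI2 (p q : form) : Prov (FImp q (FOr p q))
| ax_orE (p q r : form) :
    Prov (FImp (FImp p r) (FImp (FImp q r) (FImp (FOr p q) r)))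
| ax_negI (p q : form) :
    Prov (FImp (FImp p q) (FImp (FImp p (FNeg q)) (FNeg p)))
| ax_negE (p q : form) : Prov (FImp (FNeg p) (FImp p q))
| ax_self (a : A) : Prov (kf a (Ag a))
| ax_pair (a : A) (M M' : msg) :
    Prov (fiff (FAnd (kf a M) (kf a M')) (kf a (Pair M M')))
| ax_boxk (M : msg) : Prov (FBox M (kf CM M))
| ax_boxK (M : msg) (p q : form) :
    Prov (FImp (FBox M (FImp p q)) (FImp (FBox M p) (FBox M q)))
| ax_boxT (M : msg) (p : form) :
    Prov (FImp (FBox M p) (FImp (kf CM M) p))
| ax_boxdia (M : msg) (p : form) : Prov (FImp (FBox M p) (fdia M p))
| ax_boxI (M : msg) (p : form) : Prov (FImp p (FBox M p))
| r_mp (p q : form) : Prov (FImp p q) -> Prov p -> Prov q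
| r_mono (M M' : msg) (p : form) :
    Prov (FImp (kf CM M) (kf CM M')) -> Prov (FImp (FBox M' p) (FBox M p)).

Inductive cl (a : A) (D : msg -> Prop) : msg -> Prop :=
| cl_self : cl a D (Ag a)
| cl_D (M : msg) : D M -> cl a D M
| cl_pair (M M' : msg) : cl a D M -> cl a D M' -> cl a D (Pair M M')
| cl_fst (M M' : msg) : cl a D (Pair M M') -> cl a D M
| cl_snd (M M' : msg) : cl a D (Pair M M') -> cl a D M'.

Record model : Type := Model {
  st : Type;
  st_nonempty : inhabited st;
  le : st -> st -> Prop;
  le_refl : forall s, le s s;
  le_trans : forall s t u, le s t -> le t u -> le s u;
  le_antisym : forall s t, le s t -> le t s -> s = t;
  R : msg -> st -> st -> Prop;
  D : A -> st -> msg -> Prop;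
  val : atom -> st -> Prop;
  val_k : forall a M s, val (K a M) s <-> cl a (D a s) M;
  val_up : forall P s s', val P s -> le s s' -> val P s';
  R_i : forall M s s', R M s s' -> cl CM (D CM s') M;
  R_ii : forall M s, cl CM (D CM s) M -> R M s s;
  R_iii : forall M s, exists s', R M s s';
  R_iv_sub : forall M s s', R M s s' -> R (Ag CM) s s';
  R_iv_eq : forall s s', R (Ag CM) s s' <-> le s s';
  R_v : forall M s t u, R (Ag CM) s t -> R M t u -> R M s u;
  R_vi : forall M M',
    (forall s, cl CM (D CM s) M -> cl CM (D CM s) M') ->
    forall s s', R M s s' -> R M' s s'
}.

Fixpoint sat (m : model) (s : st m) (p : form) : Prop :=
  match p with
  | FAtom P => @val m P s
  | FAnd p q => sat s p /\ sat s q
  | FOr p q => sat s p \/ sat s q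
  | FNeg p => forall s', @le m s s' -> ~ sat s' p
  | FImp p q => forall s', @le m s s' -> sat s' p -> sat s' q
  | FBox M p => forall s', @R m M s s' -> sat s' p
  end.

Definition valid (p : form) : Prop := forall (m : model) (s : st m), sat s p.

End LIiP.

From Pilot Require Import Defs.
From mathcomp Require Import all_boot.
From mathcomp Require Import boolp classical_sets.

(* Soundness is a routine induction on derivations, using that truth is
   persistent along the order.  Completeness goes through the canonical model:
   its worlds are the prime theories (deductively closed, proper, with the
   disjunction property), ordered by inclusion, and M relates w to w' when w'
   contains w, every p with [M]p in w, and k_CM(M).  Lindenbaum's lemma, obtained
   from Zorn's lemma, extends every set of formulas not deriving phi to a prime
   theory avoiding phi; it supplies the witnesses that make every formula true
   at a world exactly when it belongs to it.  The rule of monotonicity is what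
   makes the canonical relations satisfy condition (vi): if k_CM(M) implies
   k_CM(M') in every prime theory, then it is provable. *)

Set Implicit Arguments.
Unset Strict Implicit.
Unset Printing Implicit Defensive.

Local Open Scope classical_set_scope.

Section Soundness.
Variables (A : finType) (CM : A) (B V : countType) (m : model CM B V).
Implicit Types (s t u : st m) (p q : form A B V).

Lemma R_le M s t : R M s t -> Defs.le s t.
Proof. by move/R_iv_sub/R_iv_eq. Qed.

Lemma le_R M s t u : Defs.le s t -> R M t u -> R M s u.
Proof. by move/R_iv_eq; apply: R_v. Qed.

Lemma sat_le s t p : Defs.le s t -> sat s p -> sat t p.
Proof.
elim: p s t => [P|p IHp q IHq|p IHp q IHq|p IHp|p IHp q IHq|M p IHp] s t le_st /=.
- by move=> Ps; apply: val_up le_st.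
- by case=> Hp Hq; split; [exact: (IHp _ _ le_st Hp) | exact: (IHq _ _ le_st Hq)].
- by case=> [Hp|Hq]; [left; exact: (IHp _ _ le_st Hp) | right; exact: (IHq _ _ le_st Hq)].
- by move=> Hp u le_tu; apply: (Hp u (le_trans le_st le_tu)).
- by move=> Hpq u le_tu; apply: (Hpq u (le_trans le_st le_tu)).
- by move=> Hp u Rtu; apply: (Hp u (le_R le_st Rtu)).
Qed.

Lemma Prov_sat p : Prov CM p -> forall s, sat s p.
Proof.
elim=> {p}; rewrite /fiff /fdia /kf /=.
- by move=> p q s t _ Hp u le_tu _; apply: sat_le le_tu Hp.
- move=> p q r s t _ Hpq u le_tu Hpqr v le_uv Hp.
  by apply: (Hpqr v le_uv Hp v (le_refl v)); exact: (Hpq v (le_trans le_tu le_uv) Hp).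
- by move=> p q s t _ Hp u le_tu Hq; split; first exact: sat_le le_tu Hp.
- by move=> p q s t _ [].
- by move=> p q s t _ [].
- by move=> p q s t _; left.
- by move=> p q s t _; right.
- move=> p q r s t _ Hpr u le_tu Hqr v le_uv [Hp|Hq].
    exact: (Hpr v (le_trans le_tu le_uv) Hp).
  exact: (Hqr v le_uv Hq).
- move=> p q s t _ Hpq u le_tu Hpnq v le_uv Hp.
  by apply: (Hpnq v le_uv Hp v (le_refl v)); exact: (Hpq v (le_trans le_tu le_uv) Hp).
- by move=> p q s t _ Hnp u le_tu Hp; case: (Hnp u le_tu Hp).
- by move=> a s; apply/val_k/cl_self.
- move=> a M M' s; split=> t _.
    by case=> /val_k HM /val_k HM'; apply/val_k/cl_pair.
  by move/val_k=> HMM'; split; apply/val_k; [apply: cl_fst HMM' | apply: cl_snd HMM'].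
- by move=> M s t /R_i /val_k.
- move=> M p q s t _ Hpq u le_tu Hp v Ruv.
  by apply: (Hpq v (le_R le_tu Ruv) v (le_refl v)); apply: Hp.
- by move=> M p s t _ Hp u le_tu /val_k /R_ii Ruu; exact: (Hp u (le_R le_tu Ruu)).
- move=> M p s t _ Hp u le_tu Hnn; have [v Ruv] := R_iii M u.
  apply: (Hnn v (R_le Ruv)); split; last exact: (Hp v (le_R le_tu Ruv)).
  by apply/val_k; apply: R_i Ruv.
- by move=> M p s t _ Hp u /R_le le_tu; apply: sat_le le_tu Hp.
- by move=> p q _ Hpq _ Hp s; exact: (Hpq s s (le_refl s) (Hp s)).
- move=> M M' p _ Hkk s t _ Hp u Rtu; apply: Hp; apply: (R_vi _ Rtu) => v /val_k HM.
  by apply/val_k; exact: (Hkk v v (le_refl v) HM).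
Qed.

End Soundness.

Lemma Prov_valid (A : finType) (CM : A) (B V : countType) (p : form A B V) :
  Prov CM p -> valid CM p.
Proof. by move=> Hp m; apply: Prov_sat. Qed.

Section Completeness.
Variables (A : finType) (CM : A) (B V : countType).
Local Notation kCM M := (kf V CM M).
Implicit Types (p q r phi : form A B V) (G H : set (form A B V)).

Inductive derives G : form A B V -> Prop :=
| derives_Prov p : Prov CM p -> derives G p
| derives_hyp p : G p -> derives G p
| derives_mp p q : derives G (FImp p q) -> derives G p -> derives G q.

Lemma Prov_id p : Prov CM (FImp p p).
Proof. exact: r_mp (r_mp (ax_S CM p (FImp p p) p) (ax_K CM p p)) (ax_K CM p (FImp p p)). Qed.

Lemma Prov_nec M p : Prov CM p -> Prov CM (FBox M p).
Proof. exact: r_mp (ax_boxI CM M p). Qed.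

Lemma derives_sub G H p : G `<=` H -> derives G p -> derives H p.
Proof.
move=> GH; elim=> {p} [p|p /GH|p q _ Hpq _ Hp]; first exact: derives_Prov.
  exact: derives_hyp.
exact: derives_mp Hpq Hp.
Qed.

Lemma derives_Prov1 G p q : Prov CM (FImp p q) -> derives G p -> derives G q.
Proof. by move=> Hpq; apply: derives_mp (derives_Prov _ Hpq). Qed.

Lemma derives_Prov2 G p q r :
  Prov CM (FImp p (FImp q r)) -> derives G p -> derives G q -> derives G r.
Proof. by move=> Hpqr /(derives_Prov1 Hpqr); apply: derives_mp. Qed.

Lemma derives_imp G p q : derives (p |` G) q -> derives G (FImp p q).
Proof.
elim=> {q} [q Hq|q [->|Gq]|q r _ Hqr _ Hq].
- exact: derives_Prov1 (ax_K CM q p) (derives_Prov _ Hq).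
- exact/derives_Prov/Prov_id.
- exact: derives_Prov1 (ax_K CM q p) (derives_hyp Gq).
- exact: derives_Prov2 (ax_S CM p q r) Hq Hqr.
Qed.

Lemma derives_cut G p q : derives G p -> derives (p |` G) q -> derives G q.
Proof. by move=> Hp /derives_imp Hpq; apply: derives_mp Hpq Hp. Qed.

Lemma derives0_Prov p : derives set0 p -> Prov CM p.
Proof. by elim=> // {}p q _ Hpq _ Hp; apply: r_mp Hpq Hp. Qed.

(* A derivation uses finitely many hypotheses, so those taken from the union
   of a chain all come from a single member of the chain (or from none). *)
Lemma derives_chain G (F : set (set (form A B V))) q : total_on F subset ->
  derives (G `|` \bigcup_(X in F) X) q -> exists2 X, (set0 |` F) X & derives (G `|` X) q.
Proof.
move=> Ftot; have tot : total_on (set0 |` F) subset.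
  by move=> X Y [->|FX] [->|FY]; [left|left|right|apply: Ftot].
elim=> {q} [q Hq|q [Gq|[X FX Xq]]|q r _ [X FX Hqr] _ [Y FY Hq]].
- by exists set0; [left | apply: derives_Prov].
- by exists set0; [left | apply: derives_hyp; left].
- by exists X; [right | apply: derives_hyp; right].
- have [XY|YX] := tot X Y FX FY.
    by exists Y => //; apply: (derives_mp _ Hq); apply: derives_sub (setUS XY) Hqr.
  by exists X => //; apply: derives_mp Hqr _; apply: derives_sub (setUS YX) Hq.
Qed.

Record prime_theory (t : set (form A B V)) : Prop := PrimeTheory {
  prime_closed : forall p, derives t p -> t p;
  prime_or : forall p q, t (FOr p q) -> t p \/ t q;
  prime_proper : exists p, ~ t p }.

Record world := World { theory :> form A B V -> Prop; worldP : prime_theory theory }.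

Lemma world_ext (w w' : world) : w `<=` w' -> w' `<=` w -> w = w'.
Proof.
case: w w' => [t tP] [t' t'P] /= tt' t't.
have Et : t = t' by apply/seteqP.
by subst t'; congr World; apply: Prop_irrelevance.
Qed.

Lemma Lindenbaum G phi : ~ derives G phi -> exists2 w : world, G `<=` w & ~ w phi.
Proof.
move=> nGphi; pose P X := ~ derives (G `|` X) phi.
have [T [PT Tmax]] : exists T, P T /\ forall X, T `<` X -> ~ P X.
  apply: Zorn_bigcup => F FP Ftot /(derives_chain Ftot) [X [->|/FP PX]] //.
  by rewrite setU0.
pose t := G `|` T.
have t_phi : ~ t phi by move=> tphi; apply: PT; apply: derives_hyp.
have ext p : ~ t p -> derives (p |` t) phi.
  move=> tp; apply: contrapT => nd; apply: (Tmax (p |` T)).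
    by split; [exact: subsetUr | move/(_ p (or_introl erefl)) => Tp; apply: tp; right].
  move=> d; apply: nd; apply: derives_sub d => x [Gx|[->|Tx]].
  - by right; left.
  - by left.
  - by right; right.
have t_closed p : derives t p -> t p.
  by move=> Hp; apply: contrapT => /ext /(derives_cut Hp).
suff tP : prime_theory t by exists (World tP) => //; exact: subsetUl.
split=> //; last by exists phi.
move=> p q t_pq; apply: contrapT => /not_orP[/ext/derives_imp Hp /ext/derives_imp Hq].
by apply/PT/(derives_mp (derives_Prov2 (ax_orE CM p q phi) Hp Hq)); apply: derives_hyp.
Qed.

Section WorldTheory.
Variable w : world.

Lemma world_Prov p : Prov CM p -> w p.
Proof. by move=> Hp; apply: (prime_closed (worldP w) (derives_Prov _ Hp)). Qed.

Lemma world_mp p q : w (FImp p q) -> w p -> w q.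
Proof.
move=> Hpq Hp; apply: (prime_closed (worldP w)).
exact: derives_mp (derives_hyp Hpq) (derives_hyp Hp).
Qed.

Lemma world_Prov1 p q : Prov CM (FImp p q) -> w p -> w q.
Proof. by move/world_Prov; apply: world_mp. Qed.

Lemma world_Prov2 p q r : Prov CM (FImp p (FImp q r)) -> w p -> w q -> w r.
Proof. by move=> Hpqr /(world_Prov1 Hpqr); apply: world_mp. Qed.

Lemma world_andP p q : w (FAnd p q) <-> w p /\ w q.
Proof.
split=> [Hpq|[Hp Hq]]; last exact: world_Prov2 (ax_andI _ _ _) Hp Hq.
by split; [apply: world_Prov1 (ax_andE1 _ _ _) Hpq | apply: world_Prov1 (ax_andE2 _ _ _) Hpq].
Qed.

Lemma world_orP p q : w (FOr p q) <-> w p \/ w q.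
Proof.
split; first exact: prime_or (worldP w) p q.
by case; [apply: world_Prov1 (ax_orI1 _ _ _) | apply: world_Prov1 (ax_orI2 _ _ _)].
Qed.

Lemma world_consistent p : w (FNeg p) -> ~ w p.
Proof.
move=> Hnp Hp; have [q nq] := prime_proper (worldP w).
exact/nq/(world_Prov2 (ax_negE CM p q) Hnp Hp).
Qed.

Lemma world_k a M : w (kf V a M) <-> cl a (fun N => w (kf V a N)) M.
Proof.
have pairP N N' : w (kf V a (Pair N N')) <-> w (kf V a N) /\ w (kf V a N').
  rewrite -world_andP; split; apply: world_Prov1.
    exact: r_mp (ax_andE2 _ _ _) (ax_pair CM V a N N').
  exact: r_mp (ax_andE1 _ _ _) (ax_pair CM V a N N').
split; first exact: cl_D.
elim=> {M} [|//|N N' _ HN _ HN'|N N' _ /pairP[]|N N' _ /pairP[]] //.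
- exact/world_Prov/ax_self.
- exact/pairP.
Qed.

Lemma world_boxK M p q : w (FBox M (FImp p q)) -> w (FBox M p) -> w (FBox M q).
Proof. exact: world_Prov2 (ax_boxK CM M p q). Qed.

End WorldTheory.

Lemma world_complete p : (forall w : world, w p) -> Prov CM p.
Proof.
move=> Hp; apply: contrapT => nProv.
have [|w _ /(_ (Hp w))//] := @Lindenbaum set0 p.
by move/derives0_Prov.
Qed.

Lemma world_imp (w : world) p q :
  w (FImp p q) <-> forall w' : world, w `<=` w' -> w' p -> w' q.
Proof.
split=> [Hpq w' ww'|Hpq]; first exact/world_mp/ww'.
apply: contrapT => npq; have [|w' pww' nq] := @Lindenbaum (p |` w) q.
  by move/derives_imp/(prime_closed (worldP w)).
by apply/nq/Hpq; [move=> x wx; apply: pww'; right | apply: pww'; left].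
Qed.

Lemma world_neg (w : world) p :
  w (FNeg p) <-> forall w' : world, w `<=` w' -> ~ w' p.
Proof.
split=> [Hnp w' ww'|Hnp]; first exact/world_consistent/ww'.
apply: contrapT => nnp; have [|w' pww' _] := @Lindenbaum (p |` w) (FNeg p).
  move/derives_imp => Hp; apply/nnp/(prime_closed (worldP w)).
  exact: derives_Prov2 (ax_negI CM p p) (derives_Prov _ (Prov_id p)) Hp.
by apply: (Hnp w') => [x wx|]; apply: pww'; [right | left].
Qed.

Definition Rc M (w w' : world) :=
  w `<=` w' /\ [set p | w (FBox M p)] `<=` w' /\ w' (kCM M).

Definition box_basis M (w : world) : set (form A B V) :=
  kCM M |` (w `|` [set p | w (FBox M p)]).

Lemma box_basis_Rc M (w w' : world) : box_basis M w `<=` w' -> Rc M w w'.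
Proof.
move=> bw'; split; [|split] => [x wx|x wx|]; apply: bw'.
- by right; left.
- by right; right.
- by left.
Qed.

(* Deriving q from the basis is deriving k_CM(M) -> q inside the box: the
   hypotheses other than k_CM(M) are boxed formulas of w, or formulas of w,
   which can be boxed by [p -> [M]p]. *)
Lemma box_basis_closed M (w : world) q : derives (box_basis M w) q -> w (FBox M q).
Proof.
move=> Hq; apply: (world_boxK _ (world_Prov _ (ax_boxk CM V M))).
elim: Hq => {q} [q Hq|q [->|[wq|wMq]]|q r _ Hqr _ Hq].
- exact/world_Prov/Prov_nec/(r_mp (ax_K _ _ _)).
- exact/world_Prov/Prov_nec/Prov_id.
- exact: (world_Prov1 (ax_boxI CM M _) (world_Prov1 (ax_K CM q _) wq)).
- exact: (world_boxK (world_Prov w (Prov_nec M (ax_K CM q _))) wMq).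
- exact: (world_boxK (world_boxK (world_Prov w (Prov_nec M (ax_S CM _ _ _))) Hq) Hqr).
Qed.

Lemma world_box (w : world) M p : w (FBox M p) <-> forall w', Rc M w w' -> w' p.
Proof.
split=> [Hp w' [_ [Mw' _]]|Hp]; first exact: Mw'.
apply: contrapT => np; have [|w' bw' nw'p] := @Lindenbaum (box_basis M w) p.
  by move/box_basis_closed.
exact/nw'p/Hp/box_basis_Rc.
Qed.

(* The basis does not derive ~k_CM(M): otherwise [M]~k_CM(M), hence
   <M>~k_CM(M) = ~~(k_CM(M) /\ ~k_CM(M)), would be in w, against the provable
   ~(k_CM(M) /\ ~k_CM(M)). *)
Lemma Rc_total M (w : world) : exists w', Rc M w w'.
Proof.
have [|w' bw' _] := @Lindenbaum (box_basis M w) (FNeg (kCM M)); last first.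
  by exists w'; apply: box_basis_Rc.
move/box_basis_closed/(world_Prov1 (ax_boxdia CM M _)) => Hdia.
apply: (world_consistent Hdia); apply: world_Prov.
exact: (r_mp (r_mp (ax_negI CM _ (kCM M)) (ax_andE1 _ _ _)) (ax_andE2 _ _ _)).
Qed.

Lemma Rc_CM (w w' : world) : Rc (Ag B CM) w w' <-> w `<=` w'.
Proof.
split=> [[]//|ww']; split=> //; split; last exact/world_Prov/ax_self.
move=> p /= Hp; apply: ww'; apply: world_Prov2 (ax_boxT CM _ p) Hp _.
exact/world_Prov/ax_self.
Qed.

Lemma Rc_refl M (w : world) : w (kCM M) -> Rc M w w.
Proof.
move=> Hk; split=> //; split=> // p /= Hp.
exact: world_Prov2 (ax_boxT CM M p) Hp Hk.
Qed.

Lemma Rc_mono M M' : (forall w : world, w (kCM M) -> w (kCM M')) ->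
  forall w w', Rc M w w' -> Rc M' w w'.
Proof.
move=> Hkk; have kk: Prov CM (FImp (kCM M) (kCM M')).
  by apply: world_complete => w; apply/world_imp => w' _; apply: Hkk.
move=> w w' [ww' [Mw' kw']]; split=> //; split; last exact: Hkk.
by move=> p /= Hp; apply: Mw'; apply: world_Prov1 (r_mono _ kk) Hp.
Qed.

Definition canonical_model (w0 : world) : model CM B V.
Proof.
refine (@Model A CM B V world (inhabits w0) (fun w w' => w `<=` w') _ _ world_ext
  Rc (fun a w N => w (kf V a N)) (fun P w => w (FAtom P)) _ _ _ _ Rc_total _ Rc_CM _ _).
- by move=> w p.
- by move=> w w' w'' ww' w'w'' p /ww' /w'w''.
- by move=> a M w; apply: world_k.
- by move=> P w w' Hw ww'; apply: ww'.
- by move=> M w w' [_ [_ Hk]]; apply: cl_D.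
- by move=> M w /(world_k w) /Rc_refl.
- by move=> M w w' [ww' _]; apply/Rc_CM.
- move=> M w w' w'' /Rc_CM ww' [w'w'' [Mw'' kw'']].
  by split; [move=> p /ww' /w'w'' | split=> // p /ww' /Mw''].
- by move=> M M' Hcl; apply: Rc_mono => w /(world_k w) /Hcl /(world_k w).
Defined.

Lemma canonical_sat (w0 w : world) p : @sat _ _ _ _ (canonical_model w0) w p <-> w p.
Proof.
elim: p w => [P|p IHp q IHq|p IHp q IHq|p IHp|p IHp q IHq|M p IHp] w /=.
- by [].
- by rewrite world_andP IHp IHq.
- by rewrite world_orP IHp IHq.
- by rewrite world_neg; split=> Hnp w' ww'; [rewrite -IHp | rewrite IHp]; apply: Hnp.
- rewrite world_imp; split=> Hpq w' ww'; [rewrite -IHp -IHq | rewrite IHp IHq];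
    exact: Hpq.
- by rewrite world_box; split=> Hp w' Rww'; [rewrite -IHp | rewrite IHp]; apply: Hp.
Qed.

Lemma valid_Prov p : valid CM p -> Prov CM p.
Proof. by move=> Vp; apply: world_complete => w; apply/(canonical_sat w); apply: Vp. Qed.

End Completeness.

Theorem theorem3 (A : finType) (CM : A) (B : countType) (V : countType)
  (phi : form A B V) :
  Prov CM phi <-> valid CM phi.
Proof. by split; [apply: Prov_valid | apply: valid_Prov]. Qed.
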